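(* Let $G$ and $H$ be threshold graphs. Then $G$ is (isomorphic to) an induced subgraph of $H$ if and only if $\mathrm{seq}(G)$ is a subsequence (not necessarily of consecutive digits) of $\mathrm{seq}(H)$.
   Context: A threshold graph on $n\ge 1$ vertices is built from a single base vertex $v_0$ by successively adding vertices $v_1,\dots,v_{n-1}$, where each new vertex $v_i$ is added either as an isolated vertex (adjacent to none of $v_0,\dots,v_{i-1}$) or as a dominating vertex (adjacent to all of $v_0,\dots,v_{i-1}$). The creation sequence $\mathrm{seq}(G)=s_1s_2\cdots s_{n-1}$ is the binary string with $s_i=1$ if $v_i$ was added as a dominating vertex and $s_i=0$ if added as an isolated vertex. Every unlabeled threshold graph on $n$ vertices arises from exactly one binary string of length $n-1$ in this way. *)

From mathcomp Require Import all_boot.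
Set Implicit Arguments. Unset Strict Implicit. Unset Printing Implicit Defensive.

Definition simple_graph (T : finType) (e : rel T) : Prop :=
  symmetric e /\ irreflexive e.

(* The threshold graph built from a creation sequence s = s_1 ... s_{n-1}:
   vertices v_0, ..., v_{n-1} are 'I_(size s).+1; for i < j, v_i ~ v_j iff
   v_j was added as a dominating vertex, i.e. s_j = true, where
   s_j = nth false s (j - 1). *)
Definition thr_adj (s : seq bool) : rel 'I_(size s).+1 :=
  fun i j => (i != j) && nth false s (maxn i j).-1.

Definition creation_seq_of (T : finType) (e : rel T) (s : seq bool) : Prop :=
  exists phi : 'I_(size s).+1 -> T,
    bijective phi /\ forall i j, e (phi i) (phi j) = @thr_adj s i j.

Definition induced_subgraph_iso (T U : finType) (e : rel T) (f : rel U) : Prop :=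
  exists phi : T -> U,
    injective phi /\ forall x y, f (phi x) (phi y) = e x y.

From mathcomp Require Import all_boot zify.

Set Implicit Arguments.
Unset Strict Implicit.
Unset Printing Implicit Defensive.

(* An increasing enumeration of the positions of s inside t, shifted by one and
   completed by v_0 |-> v_0, embeds the threshold graph of s into that of t:
   adjacency of v_i and v_j (i < j) depends only on the bit of the later vertex.
   Conversely, let g embed thr(s) into thr(t) and consider the last vertex of
   thr(t), which is dominating or isolated according to the last bit y of t.
   If it is not hit, drop it.  If g a is that vertex, then a is dominating or
   isolated in thr(s) as well, which forces the last bit of s to be y and lets
   a be swapped with the last vertex of thr(s); then drop both last vertices. *)

Lemma subseq_nth_index (T : eqType) (x0 : T) (s t : seq T) : subseq s t ->
  exists h : nat -> nat,
    [/\ forall i j, i < j < size s -> h i < h j,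
        forall i, i < size s -> h i < size t &
        forall i, i < size s -> nth x0 t (h i) = nth x0 s i].
Proof.
elim: t s => [|y t IHt] [|x s] //=; try by exists id; split=> // [i j /andP[]].
case: eqP => [<-|_] /IHt[h [h_mono h_lt h_nth]].
  exists (fun i => if i is k.+1 then (h k).+1 else 0); split.
  - by case=> [|i] [|j] //=; rewrite !ltnS => /h_mono.
  - by case=> [|i] //=; rewrite !ltnS => /h_lt.
  - by case=> [|i] //= /h_nth.
exists (fun i => (h i).+1); split.
- by move=> i j /h_mono.
- by move=> i /h_lt.
- by move=> i /h_nth.
Qed.

(* [thr_adj s] extended to all of nat, so that vertices can be renumbered
   without carrying ordinal bounds around. *)
Definition thr_adjn (s : seq bool) (i j : nat) : bool :=
  (i != j) && nth false s (maxn i j).-1.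

Lemma thr_adjE s (i j : 'I_(size s).+1) : @thr_adj s i j = thr_adjn s i j.
Proof. by []. Qed.

Lemma thr_adjnC s i j : thr_adjn s i j = thr_adjn s j i.
Proof. by rewrite /thr_adjn eq_sym maxnC. Qed.

Lemma thr_adjnn s i : thr_adjn s i i = false.
Proof. by rewrite /thr_adjn eqxx. Qed.

Lemma thr_adjn_rcons s x i j : i <= size s -> j <= size s ->
  thr_adjn (rcons s x) i j = thr_adjn s i j.
Proof.
move=> le_i le_j; rewrite /thr_adjn nth_rcons.
by case: eqP => //= ne_ij; rewrite ifT //; lia.
Qed.

Lemma thr_adjn_last s x i :
  i <= size s -> thr_adjn (rcons s x) i (size s).+1 = x.
Proof.
move=> le_i; rewrite /thr_adjn (_ : maxn i _ = (size s).+1); last by lia.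
by rewrite nth_rcons ltnn eqxx; case: eqP => // eq_i; lia.
Qed.

(* [a] is a dominating ([v = true]) or isolated ([v = false]) vertex. *)
Definition const_adj (s : seq bool) (a : nat) (v : bool) : Prop :=
  forall b, b <= size s -> b != a -> thr_adjn s a b = v.

Lemma const_adj_last s x : const_adj (rcons s x) (size s).+1 x.
Proof.
move=> b; rewrite size_rcons leq_eqVlt ltnS => /orP[/eqP-> /eqP //|le_b _].
by rewrite thr_adjnC thr_adjn_last.
Qed.

Lemma const_adj_rcons s x a v : a <= (size s).+1 ->
  const_adj (rcons s x) a v -> x = v.
Proof.
move=> le_a adj_a; have [eq_a|ne_a] := eqVneq a (size s).+1.
  by have := adj_a 0 isT; rewrite eq_a thr_adjnC thr_adjn_last // => ->.
have := adj_a (size s).+1; rewrite size_rcons thr_adjn_last; last first.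
  by rewrite -ltnS ltn_neqAle ne_a.
by rewrite eq_sym => ->.
Qed.

Definition repl (a b i : nat) : nat := if i == a then b else i.

Lemma thr_adjn_repl s x a i j : const_adj (rcons s x) a x ->
  i <= size s -> j <= size s ->
  thr_adjn (rcons s x) (repl a (size s).+1 i) (repl a (size s).+1 j) =
  thr_adjn s i j.
Proof.
move=> adj_a le_i le_j; rewrite -[RHS](@thr_adjn_rcons _ x) // /repl.
have adj_top := @const_adj_last s x.
have le_rcons k : k <= size s -> k <= size (rcons s x).
  by rewrite size_rcons => /leqW.
case: eqP => [->|/eqP ne_i]; case: eqP => [->|/eqP ne_j].
- by rewrite !thr_adjnn.
- by rewrite adj_top ?adj_a ?le_rcons //; lia.
- by rewrite thr_adjnC [RHS]thr_adjnC adj_top ?adj_a ?le_rcons //; lia.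
- by [].
Qed.

Definition thr_embedding (s t : seq bool) (g : nat -> nat) : Prop :=
  [/\ forall i, i <= size s -> g i <= size t,
      forall i j, i <= size s -> j <= size s -> g i = g j -> i = j &
      forall i j, i <= size s -> j <= size s ->
        thr_adjn t (g i) (g j) = thr_adjn s i j].

Lemma subseq_thr_embedding s t : subseq s t -> exists g, thr_embedding s t g.
Proof.
move=> /(subseq_nth_index false)[h [h_mono h_lt h_nth]].
pose g i := if i is k.+1 then (h k).+1 else 0.
have g_mono i j : i < j <= size s -> g i < g j.
  rewrite /g; case: i j => [|i] [|j] //=; rewrite !ltnS; exact: h_mono.
have g_le i : i <= size s -> g i <= size t.
  by rewrite /g; case: i => //= i /h_lt.
exists g; split=> // [i j le_i le_j|].
  case: (ltngtP i j) => // [lt_ij|lt_ji] eq_g.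
  - by have := g_mono i j; rewrite lt_ij le_j eq_g ltnn => /(_ isT).
  - by have := g_mono j i; rewrite lt_ji le_i eq_g ltnn => /(_ isT).
suff adj_lt i j :
    i < j -> j <= size s -> thr_adjn t (g i) (g j) = thr_adjn s i j.
  move=> i j le_i le_j; case: (ltngtP i j) => [lt_ij|lt_ji|->].
  - exact: adj_lt.
  - by rewrite thr_adjnC [RHS]thr_adjnC adj_lt.
  - by rewrite !thr_adjnn.
move=> lt_ij le_j; have := g_mono i j; rewrite lt_ij le_j /thr_adjn => /(_ isT).
case: j lt_ij le_j => [|j] //= lt_ij le_j lt_g.
rewrite (ltn_eqF lt_g) (ltn_eqF lt_ij) (maxn_idPr (ltnW lt_g)).
by rewrite (maxn_idPr (ltnW lt_ij)) h_nth.
Qed.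

Lemma thr_embedding_rcons_avoid s t y g : thr_embedding s (rcons t y) g ->
  (forall i, i <= size s -> g i != (size t).+1) -> thr_embedding s t g.
Proof.
move=> [g_le g_inj g_adj] g_avoid.
have g_le' i : i <= size s -> g i <= size t.
  move=> le_i; have := g_le i le_i; have := g_avoid i le_i.
  by rewrite size_rcons; lia.
split=> // i j le_i le_j; by rewrite -g_adj // thr_adjn_rcons ?g_le'.
Qed.

Lemma thr_embedding_rcons_top s t y g a : thr_embedding s (rcons t y) g ->
  a <= size s -> g a = (size t).+1 -> const_adj s a y.
Proof.
move=> [g_le g_inj g_adj] le_a ga b le_b ne_ba.
rewrite -g_adj // ga const_adj_last ?g_le // -ga.
by apply: contra ne_ba => /eqP/g_inj->.
Qed.

Lemma thr_embedding_rcons_hit s x t y g a :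
  thr_embedding (rcons s x) (rcons t y) g -> a <= size (rcons s x) ->
  g a = (size t).+1 -> x = y /\ thr_embedding s t (g \o repl a (size s).+1).
Proof.
move=> emb le_a ga; have adj_a := thr_embedding_rcons_top emb le_a ga.
rewrite size_rcons in le_a.
have eq_xy := const_adj_rcons le_a adj_a; subst y; split=> //.
case: emb; rewrite size_rcons => g_le g_inj g_adj.
have repl_le i : i <= size s -> repl a (size s).+1 i <= (size s).+1.
  by rewrite /repl; case: eqP => // _ /leqW.
have repl_neq i : i <= size s -> repl a (size s).+1 i != a.
  by rewrite /repl; case: ifP => [/eqP-> | /negbT //]; lia.
apply: (@thr_embedding_rcons_avoid _ _ x) => [|i le_i]; last first.
  rewrite /= -ga; apply/eqP => /(g_inj _ _ (repl_le i le_i) le_a) eq_ra.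
  by have := repl_neq i le_i; rewrite eq_ra eqxx.
split=> [i le_i|i j le_i le_j /g_inj|i j le_i le_j] /=.
- exact: g_le (repl_le i le_i).
- move=> /(_ (repl_le i le_i) (repl_le j le_j)).
  by rewrite /repl; case: eqP; case: eqP; lia.
- by rewrite g_adj ?repl_le // thr_adjn_repl.
Qed.

Lemma thr_embedding_subseq s t g : thr_embedding s t g -> subseq s t.
Proof.
elim/last_ind: t s g => [|t y IHt] s g emb.
  case: s emb => [|x s] // [g_le g_inj _].
  have g0 i : i <= size (x :: s) -> g i = 0 by move/g_le; rewrite leqn0 => /eqP.
  by have := g_inj 0 1 isT isT; rewrite !g0 // => /(_ erefl).
have [/existsP[a /eqP ga] | /existsPn g_avoid] :=
  boolP [exists a : 'I_(size s).+1, g a == (size t).+1].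
  case/lastP: s a ga emb => [|s x] a ga emb; first exact: sub0seq.
  have [<- emb'] := thr_embedding_rcons_hit emb (ltn_ord a) ga.
  by rewrite -!cats1 subseq_cat2r (IHt _ _ emb').
apply: subseq_trans (subseq_rcons t y); apply: (IHt _ g).
apply: thr_embedding_rcons_avoid emb _ => i le_i.
exact: (g_avoid (Ordinal (le_i : i < (size s).+1))).
Qed.

Lemma induced_subgraph_iso_trans (T U V : finType) (e : rel T) (f : rel U)
    (h : rel V) :
  induced_subgraph_iso e f -> induced_subgraph_iso f h ->
  induced_subgraph_iso e h.
Proof.
move=> [phi [phi_inj phi_adj]] [psi [psi_inj psi_adj]].
by exists (psi \o phi); split=> [|x y /=]; [exact: inj_comp | rewrite psi_adj].
Qed.

Lemma thr_sub_creation_seq (T : finType) (e : rel T) s :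
  creation_seq_of e s -> induced_subgraph_iso (@thr_adj s) e.
Proof. by move=> [phi [/bij_inj phi_inj phi_adj]]; exists phi. Qed.

Lemma creation_seq_sub_thr (T : finType) (e : rel T) s :
  creation_seq_of e s -> induced_subgraph_iso e (@thr_adj s).
Proof.
move=> [phi [[phiV phiK phiVK] phi_adj]]; exists phiV; split.
  exact: can_inj phiVK.
by move=> x y; rewrite -phi_adj !phiVK.
Qed.

Lemma creation_seq_induced_iso (T U : finType) (e : rel T) (f : rel U) s t :
  creation_seq_of e s -> creation_seq_of f t ->
  induced_subgraph_iso e f <-> induced_subgraph_iso (@thr_adj s) (@thr_adj t).
Proof.
move=> seq_e seq_f; split=> iso.
- apply: induced_subgraph_iso_trans (thr_sub_creation_seq seq_e) _.
  exact: induced_subgraph_iso_trans iso (creation_seq_sub_thr seq_f).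
- apply: induced_subgraph_iso_trans (creation_seq_sub_thr seq_e) _.
  exact: induced_subgraph_iso_trans iso (thr_sub_creation_seq seq_f).
Qed.

Lemma thr_induced_iso_embedding s t :
  induced_subgraph_iso (@thr_adj s) (@thr_adj t) <->
  exists g, thr_embedding s t g.
Proof.
split=> [[phi [phi_inj phi_adj]] | [g [g_le g_inj g_adj]]].
  exists (fun i => nat_of_ord (phi (inord i))).
  split=> [i _|i j le_i le_j|i j le_i le_j].
  - exact: (ltn_ord (phi (inord i))).
  - by move/val_inj/phi_inj/(congr1 (@nat_of_ord _)); rewrite !inordK.
  - by have := phi_adj (inord i) (inord j); rewrite !thr_adjE !inordK.
have le_ord (i : 'I_(size s).+1) : i <= size s := ltn_ord i.
have g_ltS (i : 'I_(size s).+1) : g i < (size t).+1 := g_le i (le_ord i).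
exists (fun i : 'I_(size s).+1 => inord (g i) : 'I_(size t).+1).
split=> [i j /(congr1 (@nat_of_ord _))|i j].
  by rewrite !inordK // => /g_inj eq_ij; apply/val_inj/eq_ij; apply: le_ord.
by rewrite !thr_adjE !inordK // g_adj.
Qed.

Theorem mainTheorem1 (T : finType) (e : rel T) (U : finType) (f : rel U)
    (s t : seq bool) :
  simple_graph e -> simple_graph f ->
  creation_seq_of e s -> creation_seq_of f t ->
  (induced_subgraph_iso e f <-> subseq s t).
Proof.
move=> _ _ seq_e seq_f.
rewrite (creation_seq_induced_iso seq_e seq_f) thr_induced_iso_embedding.
by split=> [[g /thr_embedding_subseq] | /subseq_thr_embedding].
Qed.
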